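(* Let $\mathcal{G}$ be a hypergraph with at least one edge. Then $|\lambda_{\min}(A_{\mathcal{G}})|\ge 1/(r(\mathcal{G})-1)$, where $\lambda_{\min}(A_{\mathcal{G}})$ is the smallest eigenvalue of $A_{\mathcal{G}}$.
   Context: A hypergraph $\mathcal{G}=(V,E)$ has a finite vertex set $V$ and a set $E$ of subsets of $V$ (edges), each of cardinality at least $2$. The rank $r(\mathcal{G})$ is the maximum cardinality of an edge. The adjacency matrix $A_{\mathcal{G}}$ has $(A_{\mathcal{G}})_{ij}=\sum_{e\in E,\, i,j\in e}\frac{1}{|e|-1}$ for $i\ne j$ and zero diagonal. *)

From HB Require Import structures.
From mathcomp Require Import all_boot all_order all_algebra.
From mathcomp Require Import reals.
Set Implicit Arguments. Unset Strict Implicit. Unset Printing Implicit Defensive.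
Import Order.TTheory GRing.Theory Num.Theory.
Local Open Scope ring_scope.

Definition is_hypergraph (n : nat) (E : {set {set 'I_n}}) : Prop :=
  forall e, e \in E -> (2 <= #|e|)%N.

Definition hrank (n : nat) (E : {set {set 'I_n}}) : nat :=
  \max_(e in E) #|e|.

Definition hadj (R : fieldType) (n : nat) (E : {set {set 'I_n}}) : 'M[R]_n :=
  \matrix_(i < n, j < n)
    if i == j then 0
    else \sum_(e in E | (i \in e) && (j \in e)) ((#|e|.-1)%:R)^-1.

(* For two vertices i <> j of a common edge e, the vector x = e_i - e_j gives
   x A x^T = -2 A_ij, since A has zero diagonal, and e alone contributes
   1/(|e|-1) >= 1/(r-1) to A_ij; hence x A x^T <= -(1/(r-1)) x x^T.  By the
   spectral theorem, applied to A viewed as a hermitian complex matrix, some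
   (real) eigenvalue of A lies below this Rayleigh quotient, so
   lmin <= -1/(r-1) < 0. *)

From HB Require Import structures.
From mathcomp Require Import all_boot all_order all_algebra.
From mathcomp Require Import reals complex lra zify.
Set Implicit Arguments. Unset Strict Implicit. Unset Printing Implicit Defensive.
Import Order.TTheory GRing.Theory Num.Theory.
Local Open Scope ring_scope.

Lemma quadform_delta_sub (R : comPzRingType) n (A : 'M[R]_n) i j :
  let x := (delta_mx 0 i - delta_mx 0 j : 'rV[R]_n) in
  (x *m A *m x^T) 0 0 = A i i + A j j - A i j - A j i.
Proof.
have deltaE a b :
    ((delta_mx 0 a : 'rV[R]_n) *m A *m (delta_mx 0 b : 'rV[R]_n)^T) 0 0 = A a b.
  by rewrite trmx_delta -rowE -colE !mxE.
have subE (P Q : 'M[R]_1) : (P - Q) 0 0 = P 0 0 - Q 0 0 by rewrite !mxE.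
rewrite /= linearB /= mulmxBl !mulmxBr !mulmxBl !subE !deltaE.
by rewrite opprB addrA (addrAC (A i i)) addrAC.
Qed.

Section Spectral.
Variable C : numClosedFieldType.
Local Open Scope sesquilinear_scope.

Lemma quadform_diag_mx n (y d : 'rV[C]_n) :
  (y *m diag_mx d *m y ^t*) 0 0 = \sum_k d 0 k * `|y 0 k| ^+ 2.
Proof.
rewrite mul_mx_diag !mxE; apply: eq_bigr => k _.
by rewrite !mxE normCK mulrCA mulrA.
Qed.

Lemma quadform_unitary n (P A : 'M[C]_n) (x : 'rV[C]_n) : P \is unitarymx ->
  x *m A *m x ^t* = (x *m P ^t*) *m (P *m A *m P ^t*) *m (x *m P ^t*) ^t*.
Proof.
move=> /unitarymxP PPt; have PtP : P ^t* *m P = 1%:M by apply: mulmx1C.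
rewrite -map_trmx trmx_mul map_mxM map_trmx trmxCK !mulmxA.
by rewrite -(mulmxA x (P ^t*)) PtP mulmx1 -(mulmxA (x *m A) (P ^t*)) PtP mulmx1.
Qed.

Lemma spectralmx_conj n (A : 'M[C]_n) : A \is normalmx ->
  spectralmx A *m A *m (spectralmx A) ^t* = diag_mx (spectral_diag A).
Proof.
move=> /orthomx_spectralP {2}->; have Pu := spectral_unitarymx A.
rewrite invmx_unitary // !mulmxA (unitarymxP Pu) mul1mx -mulmxA.
by rewrite (unitarymxP Pu) mulmx1.
Qed.

Lemma spectral_diag_eigenvalue n (A : 'M[C]_n) k : A \is normalmx ->
  eigenvalue A (spectral_diag A 0 k).
Proof.
move=> An; set P := spectralmx A.
have PtP : P ^t* *m P = 1%:M by apply/mulmx1C/unitarymxP/spectral_unitarymx.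
have PA : P *m A = diag_mx (spectral_diag A) *m P.
  by rewrite -[P *m A]mulmx1 -PtP mulmxA spectralmx_conj.
apply/eigenvalueP; exists ('e_k *m P).
  by rewrite -mulmxA PA mulmxA -[in LHS]rowE row_diag_mx -scalemxAl.
rewrite mulmx_free_eq0 ?row_free_unit ?spectral_unit //.
by apply/eqP => /rowP /(_ k); rewrite !mxE !eqxx => /eqP; rewrite oner_eq0.
Qed.

Lemma hermitian_spectral_diag_le_quadform n (A : 'M[C]_n) (x : 'rV[C]_n) a :
  A \is hermsymmx -> a \is Num.real -> x != 0 ->
  (x *m A *m x ^t*) 0 0 <= a * (x *m x ^t*) 0 0 ->
  exists k, spectral_diag A 0 k <= a.
Proof.
move=> Aherm a_real x_neq0 le_xAx.
set D := spectral_diag A; set P := spectralmx A; set y := x *m P ^t*.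
have Pu : P \is unitarymx := spectral_unitarymx A.
have xAx : (x *m A *m x ^t*) 0 0 = \sum_k D 0 k * `|y 0 k| ^+ 2.
  rewrite (quadform_unitary _ _ Pu) spectralmx_conj ?hermitian_normalmx //.
  exact: quadform_diag_mx.
have xx : (x *m x ^t*) 0 0 = \sum_k `|y 0 k| ^+ 2.
  rewrite -[x in x *m _]mulmx1 (quadform_unitary _ _ Pu) mulmx1 (unitarymxP Pu).
  rewrite -diag_const_mx quadform_diag_mx.
  by apply: eq_bigr => k _; rewrite mxE mul1r.
apply/existsP; apply: contraNT x_neq0; rewrite negb_exists => /forallP D_gt_a.
have {}D_gt_a k : a < D 0 k.
  have D_real : D 0 k \is Num.real by apply/mxOverP/hermitian_spectral_diag_real.
  by rewrite real_ltNge ?D_gt_a.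
have term_ge0 k : 0 <= (D 0 k - a) * `|y 0 k| ^+ 2.
  by rewrite mulr_ge0 ?exprn_ge0 // subr_ge0 ltW ?D_gt_a.
have sum_eq0 : \sum_k (D 0 k - a) * `|y 0 k| ^+ 2 = 0.
  apply/eqP; rewrite eq_le sumr_ge0 ?andbT //.
  under eq_bigr do rewrite mulrBl.
  by rewrite sumrB -mulr_sumr -xAx -xx subr_le0.
have y_eq0 : y = 0.
  apply/rowP => k; rewrite [RHS]mxE; apply/eqP.
  have /eqP := psumr_eq0P (fun k _ => term_ge0 k) sum_eq0 (i := k) isT.
  by rewrite mulf_eq0 subr_eq0 gt_eqF ?D_gt_a //= expf_eq0 normr_eq0.
by rewrite -[x]mulmx1 -(mulmx1C (unitarymxP Pu)) mulmxA -/y y_eq0 mul0mx.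
Qed.

End Spectral.

Section RealSymmetric.
Variable R : rcfType.
Local Open Scope sesquilinear_scope.
Local Notation toC := (real_complex R).

Lemma symmetric_eigenvalue_le_quadform n (A : 'M[R]_n) (x : 'rV[R]_n) a :
  A^T = A -> x != 0 -> (x *m A *m x^T) 0 0 <= a * (x *m x^T) 0 0 ->
  exists2 r, eigenvalue A r & r <= a.
Proof.
move=> A_sym x_neq0 le_xAx.
have conj_map m p (B : 'M[R]_(m, p)) : (map_mx toC B) ^t* = map_mx toC B^T.
  by apply/matrixP => i j; rewrite !mxE; exact: conjc_real.
have Aherm : map_mx toC A \is hermsymmx.
  by apply/is_hermitianmxP; rewrite expr0 scale1r conj_map A_sym.
have a_real : toC a \is Num.real by apply/complex_realP; exists a.
have x_neq0' : map_mx toC x != 0 by rewrite map_mx_eq0.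
have [|k] := hermitian_spectral_diag_le_quadform Aherm a_real x_neq0'.
  by rewrite conj_map -!map_mxM ![map_mx _ _ 0 0]mxE -rmorphM lecR.
have /complex_realP [r Dk_eq] : spectral_diag (map_mx toC A) 0 k \is Num.real.
  by apply/mxOverP/hermitian_spectral_diag_real.
rewrite Dk_eq lecR => le_ra; exists r => //.
rewrite -(eigenvalue_map toC).
by have := spectral_diag_eigenvalue k (hermitian_normalmx Aherm); rewrite Dk_eq.
Qed.

End RealSymmetric.

Section HypergraphAdjacency.
Variables (R : numFieldType) (n : nat) (E : {set {set 'I_n}}).

Lemma hadj_diag i : hadj R E i i = 0.
Proof. by rewrite mxE eqxx. Qed.

Lemma tr_hadj : (hadj R E)^T = hadj R E.
Proof.
apply/matrixP => i j; rewrite !mxE eq_sym; case: eqP => // _.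
by apply: eq_bigl => e; rewrite [(j \in e) && _]andbC.
Qed.

Lemma card_le_hrank e : e \in E -> (#|e| <= hrank E)%N.
Proof. by move=> eE; rewrite /hrank (bigD1 e) //= leq_maxl. Qed.

Lemma inv_rank_le_hadj e i j : e \in E -> i \in e -> j \in e -> i != j ->
  ((hrank E).-1%:R)^-1 <= hadj R E i j.
Proof.
move=> eE ie je ij.
have /andP[e_gt1 e_le] : (0 < #|e|.-1 <= (hrank E).-1)%N.
  have e_gt1 : (1 < #|e|)%N by apply/card_gt1P; exists i, j.
  have := card_le_hrank eE; lia.
rewrite mxE (negbTE ij) (bigD1 e) /=; last by rewrite eE ie je.
apply: ler_wpDr; first by apply: sumr_ge0 => e' _; rewrite invr_ge0 ler0n.
by rewrite lef_pV2 ?posrE ?ltr0n ?ler_nat //; apply: leq_trans e_le.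
Qed.

End HypergraphAdjacency.

Theorem corollary2 (R : realType) (n : nat) (E : {set {set 'I_n}})
  (hE : is_hypergraph E) (hne : E != set0) (lmin : R) :
  eigenvalue (hadj R E) lmin ->
  (forall mu : R, eigenvalue (hadj R E) mu -> lmin <= mu) ->
  ((hrank E).-1%:R)^-1 <= `|lmin|.
Proof.
move=> _ lmin_le.
have [e eE] := set0Pn _ hne.
have [i [j [ie je ij]]] := card_gt1P (hE _ eE).
set c := ((hrank E).-1%:R)^-1 : R.
have c_le_Aij : c <= hadj R E i j := inv_rank_le_hadj R eE ie je ij.
have c_gt0 : 0 < c.
  rewrite invr_gt0 ltr0n; have := card_le_hrank eE; have := hE _ eE; lia.
pose x := (delta_mx 0 i - delta_mx 0 j : 'rV[R]_n).
have x_neq0 : x != 0.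
  apply/eqP => /rowP/(_ i); rewrite !mxE !eqxx (negbTE ij) subr0 => /eqP.
  by rewrite oner_eq0.
have Aji : hadj R E j i = hadj R E i j by rewrite -[in LHS]tr_hadj mxE.
have xx : (x *m x^T) 0 0 = 2.
  rewrite -[x in x *m _]mulmx1 quadform_delta_sub !mxE !eqxx.
  by rewrite (negbTE ij) eq_sym (negbTE ij) !subr0.
have quad_le : (x *m hadj R E *m x^T) 0 0 <= - c * (x *m x^T) 0 0.
  by rewrite quadform_delta_sub !hadj_diag Aji xx; lra.
have [r r_eig r_le] :=
  symmetric_eigenvalue_le_quadform (tr_hadj R E) x_neq0 quad_le.
have lmin_le_c : lmin <= - c := le_trans (lmin_le r r_eig) r_le.
rewrite ler0_norm; lra.
Qed.
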